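(* For $0<R<1$, let $\mathbb G(R)$ be the unique solution in $(0,1)$ of the equation $G=1-e^{-G/R}$. Then for any choice of $\theta\ge1$, codes $\mathcal C=\{\mathscr C_1,\dots,\mathscr C_\theta\}$ and probability mass function $\boldsymbol\Lambda=(\Lambda_1,\dots,\Lambda_\theta)$ as in the context whose rate $k/\bar n$ equals $R$, the asymptotic threshold satisfies $$G^*(\mathcal C,\boldsymbol\Lambda)\le\mathbb G(R).$$
   Context: For $h=1,\dots,\theta$, $\mathscr C_h$ is an $(n_h,k)$ binary linear block code (common dimension $k$) with minimum distance $d_h\ge2$ and no idle symbols (no coordinate identically zero on the code); $\Lambda_h\ge0$, $\sum_h\Lambda_h=1$; $\bar n=\sum_h\Lambda_hn_h$ and the rate is $R=k/\bar n$. Un-normalized information function $\tilde e^{(h)}_g$ ($0\le g\le n_h$): the sum over all $g$-subsets of columns of a generator matrix of $\mathscr C_h$ of the rank of the corresponding $k\times g$ submatrix ($\tilde e_0=0$). For $G\ge0$ define $f_{\mathsf b}(p)=\frac1{\bar n}\sum_h\Lambda_h\sum_{t=0}^{n_h-1}p^t(1-p)^{n_h-1-t}[(n_h-t)\tilde e^{(h)}_{n_h-t}-(t+1)\tilde e^{(h)}_{n_h-1-t}]$, $f_{\mathsf s}(q)=1-\exp\{-\frac{G}{R}q\}$, and the recursion $p_\ell=f_{\mathsf s}(f_{\mathsf b}(p_{\ell-1}))$ with $p_0=1-e^{-G/R}$. The asymptotic threshold (capacity of the scheme) is $G^*(\mathcal C,\boldsymbol\Lambda)=\sup\{G\ge0: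 p_\ell\to0\text{ as }\ell\to\infty\}$. *)

From HB Require Import structures.
From mathcomp Require Import all_boot all_order all_algebra.
From Stdlib Require Import Reals.

Set Implicit Arguments.
Unset Strict Implicit.
Unset Printing Implicit Defensive.
Local Open Scope ring_scope.

Definition wt (n : nat) (v : 'rV['F_2]_n) : nat := #|[set j : 'I_n | v ord0 j != GRing.zero]|.

Definition has_dim (k n : nat) (Gm : 'M['F_2]_(k, n)) : Prop := \rank Gm = k.

Definition min_dist_ge (k n : nat) (Gm : 'M['F_2]_(k, n)) (d : nat) : Prop :=
  forall u : 'rV['F_2]_k, (u *m Gm) != GRing.zero -> (d <= wt (u *m Gm))%nat.

Definition no_idle (k n : nat) (Gm : 'M['F_2]_(k, n)) : Prop :=
  forall j : 'I_n, exists u : 'rV['F_2]_k, (u *m Gm) ord0 j != GRing.zero.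

Definition subcols (k n : nat) (Gm : 'M['F_2]_(k, n)) (S : {set 'I_n})
  : 'M['F_2]_(k, #|S|) := colsub (fun j : 'I_#|S| => enum_val j) Gm.

(* un-normalized information function: sum over all g-subsets S of columns
   of the rank of the corresponding submatrix *)
Definition etilde (k n : nat) (Gm : 'M['F_2]_(k, n)) (g : nat) : nat :=
  (\sum_(S : {set 'I_n} | #|S| == g) \rank (subcols Gm S))%nat.

Local Close Scope ring_scope.
Local Open Scope R_scope.

Definition nbar (theta : nat) (Lam : nat -> R) (n : nat -> nat) : R :=
  sum_f_R0 (fun h => Lam h * INR (n h)) (theta - 1).

Definition f_b (theta k : nat) (n : nat -> nat)
  (Gm : forall h : nat, 'M['F_2]_(k, n h)) (Lam : nat -> R) (p : R) : R :=
  / nbar theta Lam n *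
  sum_f_R0 (fun h => Lam h *
     sum_f_R0 (fun t =>
        p ^ t * (1 - p) ^ (n h - 1 - t) *
        (INR (n h - t) * INR (etilde (Gm h) (n h - t))
         - INR (t + 1) * INR (etilde (Gm h) (n h - 1 - t))))
       (n h - 1))
    (theta - 1).

Definition f_s (G Rr q : R) : R := 1 - exp (- (G / Rr) * q).

Fixpoint p_seq (theta k : nat) (n : nat -> nat)
  (Gm : forall h : nat, 'M['F_2]_(k, n h)) (Lam : nat -> R) (Rr G : R) (l : nat)
  : R :=
  match l with
  | O => 1 - exp (- (G / Rr))
  | S l' => f_s G Rr (f_b theta Gm Lam (p_seq theta Gm Lam Rr G l'))
  end.

(* the set whose supremum is the asymptotic threshold G*(C, Lambda) *)
Definition threshold_set (theta k : nat) (n : nat -> nat)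
  (Gm : forall h : nat, 'M['F_2]_(k, n h)) (Lam : nat -> R) (Rr : R) : R -> Prop :=
  fun G => 0 <= G /\ Un_cv (p_seq theta Gm Lam Rr G) 0.

From HB Require Import structures.
From mathcomp Require Import all_boot all_order all_algebra.
From mathcomp Require Import zify.
From Stdlib Require Import Reals Lra Lia Classical.
From Coquelicot Require Import Coquelicot.

Set Implicit Arguments.
Unset Strict Implicit.
Unset Printing Implicit Defensive.
Import GRing.Theory.

(* Write e_h(g) for the information function of the h-th code and f_b for the
   bit-node map of the ensemble.  The proof has three ingredients.
   1. Combinatorics: the rank of a set of columns is submodular, so the layer
      sums e_h(g) are concave after normalisation by binomial coefficients.
   2. Polynomials: f_b is a weighted sum of Bernstein-type polynomials whose
      derivatives have the concavity expressions as coefficients; hence f_b is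
      nondecreasing on [0,1], bounded by 1 there (since e_h(1) <= n_h), and has
      an explicit antiderivative whose increase over [0,1] is the rate
      k / nbar = Rr, because e_h(0) = 0 and e_h(n_h) = k (area theorem).
   3. Stalling: for such an f_b and a load G larger than the fixed point GG of
      G |-> 1 - exp(-G/Rr), comparing f_b with the inverse of the check-node
      map and integrating produces a point p > 0 that the recursion can never
      cross, so p_l does not tend to 0.  Hence every G in the threshold set is
      at most GG, and so is its supremum. *)

Section ColumnRank.
Variables (k n : nat) (Gm : 'M['F_2]_(k, n)).

Definition colspace (S : {set 'I_n}) : 'M['F_2]_k := (\sum_(j in S) <<row j Gm^T>>)%MS.

Lemma col_sub_colspace (S : {set 'I_n}) j : j \in S -> (row j Gm^T <= colspace S)%MS.
Proof. by move=> jS; apply: (sumsmx_sup j) => //; rewrite genmxE. Qed.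

Lemma colspace_min (S : {set 'I_n}) m (W : 'M['F_2]_(m, k)) :
  (forall j, j \in S -> (row j Gm^T <= W)%MS) -> (colspace S <= W)%MS.
Proof. by move=> SW; apply/sumsmx_subP => j jS; rewrite genmxE; apply: SW. Qed.

Lemma rank_subcols (S : {set 'I_n}) : \rank (subcols Gm S) = \rank (colspace S).
Proof.
rewrite -mxrank_tr /subcols trmx_mxsub; apply: eqmx_rank; apply/andP; split.
  by apply/row_subP => i; rewrite row_rowsub; apply: col_sub_colspace; apply: enum_valP.
apply: colspace_min => j jS.
by rewrite -(enum_rankK_in jS jS) -row_rowsub; apply: row_sub.
Qed.

Definition colrank (S : {set 'I_n}) : nat := \rank (colspace S).

(* Submodularity, from dim (U + W) + dim (U :&: W) = dim U + dim W. *)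
Lemma colrank_submod (A : {set 'I_n}) x y :
  (colrank (x |: (y |: A)) + colrank A <= colrank (x |: A) + colrank (y |: A))%nat.
Proof.
rewrite /colrank -[X in (_ <= X)%nat]mxrank_sum_cap; apply: leq_add.
  apply: mxrankS; apply: colspace_min => j; rewrite !inE => /or3P [/eqP->|/eqP->|jA].
  - by apply: submx_trans (addsmxSl _ _); apply: col_sub_colspace; rewrite !inE eqxx.
  - by apply: submx_trans (addsmxSr _ _); apply: col_sub_colspace; rewrite !inE eqxx.
  - by apply: submx_trans (addsmxSl _ _); apply: col_sub_colspace; rewrite !inE jA orbT.
apply: mxrankS; rewrite sub_capmx; apply/andP; split; apply: colspace_min => j jA;
  by apply: col_sub_colspace; rewrite !inE jA orbT.
Qed.

End ColumnRank.

(* Double counting: pairs (A, x) with #|A| = m and x \notin A correspond to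
   pairs (B, x) with #|B| = m + 1 and x \in B, via B = x |: A. *)
Lemma sum_extensions (T : finType) m (F : {set T} -> nat) :
  (\sum_(A : {set T} | #|A| == m) \sum_(x | x \notin A) F (x |: A) =
   m.+1 * \sum_(B : {set T} | #|B| == m.+1) F B)%nat.
Proof.
rewrite big_distrr /=.
rewrite [RHS](eq_bigr (fun B : {set T} => \sum_(x in B) F B)); last first.
  by move=> B /eqP cardB; rewrite sum_nat_const cardB.
rewrite (exchange_big_dep (fun _ => true)) //= [RHS](exchange_big_dep (fun _ => true)) //=.
apply: eq_bigr => x _.
rewrite [RHS](reindex_onto (fun A : {set T} => x |: A) (fun B : {set T} => B :\ x)) /=;
  last by move=> B /andP [_ xB]; rewrite setD1K.
apply: eq_bigl => A; case: (boolP (x \in A)) => xA /=.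
  have -> : x |: A = A by apply/setUidPr; rewrite sub1set.
  rewrite xA andbF; symmetry; apply/negbTE/negP => /andP [_ /eqP AxA].
  by move: xA; rewrite -AxA !inE eqxx.
by rewrite setU1K // eqxx cardsU1 xA setU11 !andbT.
Qed.

Lemma sum_notin_const (T : finType) (C : {set T}) c :
  (\sum_(y | y \notin C) c = (#|T| - #|C|) * c)%nat.
Proof.
rewrite (eq_bigl (fun y => y \in ~: C)); last by move=> y; rewrite inE.
by rewrite sum_nat_const -(cardsC C) addKn.
Qed.

(* Both sides count chains A c x|:A c y|:x|:A with #|A| = g. *)
Section LayerSums.
Variables (T : finType) (r : {set T} -> nat).
Hypothesis r_submod :
  forall A x y, (r (x |: (y |: A)) + r A <= r (x |: A) + r (y |: A))%nat.

Definition layer_sum (g : nat) : nat := (\sum_(S : {set T} | #|S| == g) r S)%nat.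

Let N := #|T|.
Let chain_sum (F : {set T} -> T -> T -> nat) (g : nat) : nat :=
  (\sum_(A : {set T} | #|A| == g) \sum_(x | x \notin A) \sum_(y | y \notin x |: A) F A x y)%nat.

Lemma layer_sum_concave g : (g.+2 <= N)%nat ->
  (g.+2 * g.+1 * layer_sum g.+2 + (N - g) * (N - g.+1) * layer_sum g
     <= 2 * g.+1 * (N - g.+1) * layer_sum g.+1)%nat.
Proof.
move=> gN.
have top : chain_sum (fun A x y => r (y |: (x |: A))) g = (g.+2 * g.+1 * layer_sum g.+2)%nat.
  rewrite /chain_sum (sum_extensions g (fun C : {set T} => \sum_(y | y \notin C) r (y |: C))).
  by rewrite (sum_extensions g.+1 r) /layer_sum; nia.
have bottom : chain_sum (fun A x y => r A) g = ((N - g) * (N - g.+1) * layer_sum g)%nat.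
  rewrite /chain_sum /layer_sum big_distrr /=; apply: eq_bigr => A /eqP cardA.
  rewrite (eq_bigr (fun x => (N - g.+1) * r A)%nat); last first.
    by move=> x xA; rewrite sum_notin_const cardsU1 xA cardA.
  by rewrite sum_notin_const cardA mulnA.
have mid_x : chain_sum (fun A x y => r (x |: A)) g = (g.+1 * (N - g.+1) * layer_sum g.+1)%nat.
  rewrite /chain_sum (eq_bigr (fun A : {set T} => \sum_(x | x \notin A) (N - g.+1) * r (x |: A))%nat);
    last first.
    move=> A /eqP cardA; apply: eq_bigr => x xA.
    by rewrite sum_notin_const cardsU1 xA cardA.
  by rewrite (sum_extensions g (fun C : {set T} => (N - g.+1) * r C)%nat) -big_distrr /layer_sum /=; nia.
have mid_y : chain_sum (fun A x y => r (y |: A)) g = (g.+1 * (N - g.+1) * layer_sum g.+1)%nat.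
  rewrite -mid_x /chain_sum; apply: eq_bigr => A /eqP cardA.
  rewrite (exchange_big_dep (fun y => y \notin A)) /=; last first.
    by move=> x y _; rewrite !inE negb_or => /andP [].
  rewrite [RHS](eq_bigr (fun x => (N - g.+1) * r (x |: A))%nat); last first.
    by move=> x xA; rewrite sum_notin_const cardsU1 xA cardA.
  apply: eq_bigr => y yA.
  rewrite (eq_bigl (fun x => x \notin y |: A)); last first.
    by move=> x; rewrite !inE !negb_or yA andbT [y == x]eq_sym andbC.
  by rewrite sum_notin_const cardsU1 yA cardA.
rewrite -top -bottom (_ : 2 * g.+1 * (N - g.+1) * layer_sum g.+1 = g.+1 * (N - g.+1) * layer_sum g.+1
  + g.+1 * (N - g.+1) * layer_sum g.+1)%nat; last by nia.
rewrite -[X in (_ <= X + _)%nat]mid_x -mid_y /chain_sum -!big_split /=.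
apply: leq_sum => A _; rewrite -!big_split /=; apply: leq_sum => x _.
rewrite -!big_split /=; apply: leq_sum => y _.
by have := r_submod A y x; lia.
Qed.

End LayerSums.

Section InformationFunction.
Variables (k n : nat) (Gm : 'M['F_2]_(k, n)).

Lemma etilde_layer_sum g : etilde Gm g = layer_sum (colrank Gm) g.
Proof. by apply: eq_bigr => S _; rewrite rank_subcols. Qed.

Lemma etilde0 : etilde Gm 0 = 0%nat.
Proof.
apply: big1 => S /eqP cardS; apply/eqP; rewrite -leqn0.
by apply: leq_trans (rank_leq_col _) _; rewrite cardS.
Qed.

Lemma etilde1_le : (etilde Gm 1 <= n)%nat.
Proof.
apply: leq_trans (_ : (\sum_(S : {set 'I_n} | #|S| == 1%nat) 1 <= n)%nat).
  by apply: leq_sum => S /eqP cardS; apply: leq_trans (rank_leq_col _) _; rewrite cardS.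
rewrite sum1_card (eq_card (B := [set S : {set 'I_n} | #|S| == 1%nat])); last first.
  by move=> S; rewrite inE.
by rewrite card_draws card_ord bin1.
Qed.

Lemma etilde_full : etilde Gm n = \rank Gm.
Proof.
rewrite /etilde (big_pred1 setT); last first.
  move=> S /=; rewrite eqEcard subsetT cardsT card_ord /=.
  have := max_card (mem S); rewrite card_ord => le_Sn.
  by rewrite eqn_leq le_Sn.
rewrite rank_subcols -(mxrank_tr Gm); apply: eqmx_rank; apply/andP; split.
  by apply: colspace_min => j _; apply: row_sub.
by apply/row_subP => j; apply: col_sub_colspace; rewrite inE.
Qed.

Lemma etilde_concave g : (g.+2 <= n)%nat ->
  (g.+2 * g.+1 * etilde Gm g.+2 + (n - g) * (n - g.+1) * etilde Gm g
     <= 2 * g.+1 * (n - g.+1) * etilde Gm g.+1)%nat.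
Proof.
rewrite !etilde_layer_sum.
by have := @layer_sum_concave _ _ (@colrank_submod _ _ Gm) g; rewrite card_ord.
Qed.

End InformationFunction.

Local Open Scope R_scope.
Unset Implicit Arguments.

Lemma sum_f_R0_nonneg (f : nat -> R) N :
  (forall t, (t <= N)%nat -> 0 <= f t) -> 0 <= sum_f_R0 f N.
Proof.
induction N as [|N IH]; intros Hf; simpl.
- apply Hf; lia.
- apply Rplus_le_le_0_compat; [apply IH; intros; apply Hf|apply Hf]; lia.
Qed.

Lemma sum_f_R0_opp (f : nat -> R) N : sum_f_R0 (fun t => - f t) N = - sum_f_R0 f N.
Proof. induction N as [|N IH]; simpl; [|rewrite IH]; ring. Qed.

Lemma derivable_pt_lim_sum (f f' : nat -> R -> R) N x :
  (forall t, (t <= N)%nat -> derivable_pt_lim (f t) x (f' t x)) ->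
  derivable_pt_lim (fun y => sum_f_R0 (fun t => f t y) N) x (sum_f_R0 (fun t => f' t x) N).
Proof.
induction N as [|N IH]; intros Hf; simpl.
- apply Hf; lia.
- apply (derivable_pt_lim_plus (fun y => sum_f_R0 (fun t => f t y) N) (f (S N))).
  + apply IH; intros t Ht; apply Hf; lia.
  + apply Hf; lia.
Qed.

Lemma nondecr_of_deriv (f f' : R -> R) :
  (forall x, derivable_pt_lim f x (f' x)) ->
  (forall x, 0 <= x <= 1 -> 0 <= f' x) ->
  forall p q, 0 <= p -> p <= q -> q <= 1 -> f p <= f q.
Proof.
intros Hd Hpos p q Hp Hpq Hq.
destruct (Req_dec p q) as [->|Hne]; [lra|].
destruct (MVT_cor2 f f' p q) as [c [Hc1 Hc2]]; [lra|intros; apply Hd|].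
assert (0 <= f' c * (q - p)) by (apply Rmult_le_pos; [apply Hpos|]; lra).
lra.
Qed.

Definition bern (a : nat -> R) (M : nat) (p : R) : R :=
  sum_f_R0 (fun t => p ^ t * (1 - p) ^ (M - t) * a t) M.

Lemma bern_at_0 a M : bern a M 0 = a 0%nat.
Proof.
unfold bern; induction M as [|M IH].
- simpl; ring.
- rewrite tech5 (sum_eq _ (fun t => 0 ^ t * (1 - 0) ^ (M - t) * a t)).
  + rewrite IH; simpl; ring.
  + intros i _; rewrite Rminus_0_r !pow1; reflexivity.
Qed.

Lemma bern_at_1 a M : bern a M 1 = a M.
Proof.
unfold bern; destruct M as [|M].
- simpl; ring.
- rewrite tech5 sum_eq_R0.
  + rewrite subnn; simpl; rewrite pow1; ring.
  + intros t Ht; replace (S M - t)%nat with (S (M - t)) by lia; simpl; ring.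
Qed.

Lemma deriv_bern_term t j c x :
  derivable_pt_lim (fun p => p ^ t * (1 - p) ^ j * c) x
    ((INR t * x ^ Nat.pred t * (1 - x) ^ j - x ^ t * (INR j * (1 - x) ^ Nat.pred j)) * c).
Proof.
apply is_derive_Reals; auto_derive; auto.
replace (1 + - x) with (1 - x) by ring; ring.
Qed.

Lemma deriv_bern_succ a m x :
  derivable_pt_lim (bern a (S m)) x
    (bern (fun t => INR (t + 1) * a (t + 1)%nat - INR (S m - t) * a t) m x).
Proof.
set (P := fun t => INR t * x ^ Nat.pred t * (1 - x) ^ (S m - t) * a t).
set (Q := fun t => x ^ t * (INR (S m - t) * (1 - x) ^ Nat.pred (S m - t)) * a t).
assert (Hshift : sum_f_R0 (fun t => P t - Q t) (S m) =
  bern (fun t => INR (t + 1) * a (t + 1)%nat - INR (S m - t) * a t) m x).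
{ rewrite minus_sum (decomp_sum P) ?tech5; [|lia].
  assert (HP0 : P 0%nat = 0) by (unfold P; simpl; ring).
  assert (HQ : Q (S m) = 0) by (unfold Q; rewrite subnn; simpl; ring).
  rewrite HP0 HQ Rplus_0_l Rplus_0_r -minus_sum.
  apply sum_eq; intros i Hi; unfold P, Q.
  rewrite subSS addn1.
  replace (S m - i)%nat with (S (m - i)) by lia; simpl Nat.pred; ring. }
rewrite <- Hshift; unfold bern.
apply (derivable_pt_lim_sum (fun t p => p ^ t * (1 - p) ^ (S m - t) * a t)
  (fun t p => P t - Q t)).
intros t _; unfold P, Q; rewrite <- Rmult_minus_distr_r; apply deriv_bern_term.
Qed.

Lemma bern_nonneg a M x :
  (forall t, (t <= M)%nat -> 0 <= a t) -> 0 <= x <= 1 -> 0 <= bern a M x.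
Proof.
intros Ha Hx; apply sum_f_R0_nonneg; intros t Ht.
apply Rmult_le_pos; [apply Rmult_le_pos; apply pow_le; lra|apply Ha, Ht].
Qed.

Definition info_poly (e : nat -> R) (n : nat) : R -> R := bern (fun t => e (n - t)%nat) n.

Definition info_diff (e : nat -> R) (n t : nat) : R :=
  INR (n - t) * e (n - t)%nat - INR (t + 1) * e (n - 1 - t)%nat.

(* The derivative of -info_poly e n is the Bernstein sum with coefficients
   info_diff e n (after telescoping the two halves of deriv_bern_succ). *)
Lemma deriv_info_poly e n x : (0 < n)%nat ->
  derivable_pt_lim (fun p => - info_poly e n p) x (bern (info_diff e n) (n - 1) x).
Proof.
intros Hn; destruct n as [|m]; [lia|].
replace (S m - 1)%nat with m by lia.
replace (bern (info_diff e (S m)) m x) with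
  (- bern (fun t => INR (t + 1) * e (S m - (t + 1))%nat - INR (S m - t) * e (S m - t)%nat) m x).
- apply derivable_pt_lim_opp, deriv_bern_succ.
- unfold bern; rewrite <- sum_f_R0_opp; apply sum_eq; intros t Ht; unfold info_diff.
  replace (S m - (t + 1))%nat with (S m - 1 - t)%nat by lia; ring.
Qed.

(* Binomially normalised concavity of e makes  bern (info_diff e n) (n-1)
   nondecreasing on [0,1]: each coefficient of its derivative is one
   instance of the concavity inequality. *)
Lemma info_diff_nondecr e n : (0 < n)%nat ->
  (forall g, (g + 2 <= n)%nat ->
     INR (g + 2) * INR (g + 1) * e (g + 2)%nat + INR (n - g) * INR (n - g - 1) * e g
     <= 2 * INR (g + 1) * INR (n - g - 1) * e (g + 1)%nat) ->
  forall p q, 0 <= p -> p <= q -> q <= 1 ->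
  bern (info_diff e n) (n - 1) p <= bern (info_diff e n) (n - 1) q.
Proof.
intros Hn Hconc; destruct n as [|[|m]]; [lia| |].
- intros p q _ _ _; unfold bern; simpl; lra.
- replace (S (S m) - 1)%nat with (S m) by lia.
  apply (nondecr_of_deriv _ _ (deriv_bern_succ _ m)).
  intros x Hx; apply bern_nonneg; [|exact Hx]; intros t Ht.
  set (g := (m - t)%nat); specialize (Hconc g ltac:(lia)); unfold info_diff.
  replace (S (S m) - (t + 1))%nat with (g + 1)%nat by lia.
  replace (S (S m) - 1 - (t + 1))%nat with g by lia.
  replace (S (S m) - t)%nat with (g + 2)%nat by lia.
  replace (S (S m) - 1 - t)%nat with (g + 1)%nat by lia.
  replace (S m - t)%nat with (g + 1)%nat by lia.
  replace (t + 1 + 1)%nat with (t + 2)%nat by lia.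
  replace (S (S m) - g)%nat with (t + 2)%nat in Hconc by lia.
  replace (t + 2 - 1)%nat with (t + 1)%nat in Hconc by lia.
  nra.
Qed.

Lemma exp_le_compat x y : x <= y -> exp x <= exp y.
Proof.
intros [Hlt| ->]; [apply Rlt_le, exp_increasing, Hlt|apply Rle_refl].
Qed.

(* Tangent-line inequality for exp, from 1 + z <= exp z. *)
Lemma exp_tangent x y : exp x * (1 + (y - x)) <= exp y.
Proof.
replace (exp y) with (exp x * exp (y - x)) by (rewrite <- exp_plus; f_equal; ring).
apply Rmult_le_compat_l; [apply Rlt_le, exp_pos|apply exp_ineq1_le].
Qed.

Lemma exp_convex lam a : 0 <= lam <= 1 -> exp (lam * a) <= lam * exp a + (1 - lam).
Proof.
intros Hlam.
assert (Ha : lam * (exp (lam * a) * (1 + (a - lam * a))) <= lam * exp a).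
{ apply Rmult_le_compat_l; [lra|apply exp_tangent]. }
assert (H0 : (1 - lam) * (exp (lam * a) * (1 + (0 - lam * a))) <= (1 - lam) * exp 0).
{ apply Rmult_le_compat_l; [lra|apply exp_tangent]. }
rewrite exp_0 in H0; nra.
Qed.

(* Since G |-> 1 - exp (-G/Rr) is concave and vanishes at 0, it lies below
   the identity beyond its nonzero fixed point GG. *)
Lemma above_fixed_point Rr GG G :
  0 < Rr -> 0 < GG -> GG = 1 - exp (- (GG / Rr)) -> GG <= G -> 1 - exp (- (G / Rr)) <= G.
Proof.
intros HR HGG Hfix HG.
set (lam := GG / G).
assert (Hlam : 0 < lam <= 1).
{ unfold lam; split; [apply Rdiv_lt_0_compat; lra|].
  apply (Rmult_le_reg_r G); [lra|]; unfold Rdiv; rewrite Rmult_assoc Rinv_l; lra. }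
assert (Hconv := exp_convex lam (- (G / Rr)) ltac:(lra)).
replace (lam * - (G / Rr)) with (- (GG / Rr)) in Hconv by (unfold lam; field; lra).
assert (Hscaled : lam * (1 - exp (- (G / Rr))) <= lam * G).
{ replace (lam * G) with GG by (unfold lam; field; lra); lra. }
apply Rmult_le_reg_l in Hscaled; lra.
Qed.

Section Stalling.
Variables (fb A : R -> R) (Rr : R).
Hypothesis Rr_pos : 0 < Rr.
Hypothesis fb_nondecr : forall p q, 0 <= p -> p <= q -> q <= 1 -> fb p <= fb q.
Hypothesis fb_le_1 : forall p, 0 <= p <= 1 -> fb p <= 1.
Hypothesis A_deriv : forall x, derivable_pt_lim A x (fb x).
Hypothesis A_area : A 1 - A 0 = Rr.

Lemma area_increment_le x y : 0 <= x < y -> y <= 1 -> A y - A x <= y - x.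
Proof.
intros Hx Hy.
destruct (MVT_cor2 A fb x y) as [z [Hz1 Hz2]]; [lra|intros; apply A_deriv|].
assert (fb z * (y - x) <= 1 * (y - x)) by (apply Rmult_le_compat_r; [|apply fb_le_1]; lra).
lra.
Qed.

(* If the recursion strictly decreases on (0, p0], with p0 = 1 - exp (-c), then
   fb p < - ln (1 - p) / c there.  Comparing A with the antiderivative
   B x = ((1 - x) ln (1 - x) + x) / c  of the right-hand side on [0, p0], and
   using the unit-rate bound on [p0, 1], gives Rr < p0 / c. *)
Lemma area_bound c p0 : 0 < c -> p0 = 1 - exp (- c) ->
  (forall p, 0 < p <= p0 -> 1 - exp (- c * fb p) < p) -> Rr < p0 / c.
Proof.
intros Hc Hp0 Hdecr.
assert (Hexp : 0 < exp (- c) < 1).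
{ split; [apply exp_pos|rewrite <- exp_0; apply exp_increasing; lra]. }
assert (Hlog : forall p, 0 < p <= p0 -> fb p < - ln (1 - p) / c).
{ intros p Hp; specialize (Hdecr p Hp).
  assert (ln (1 - p) < - c * fb p).
  { rewrite <- (ln_exp (- c * fb p)); apply ln_increasing; lra. }
  apply (Rmult_lt_reg_r c); [lra|].
  unfold Rdiv; rewrite Rmult_assoc Rinv_l; lra. }
set (B := fun x => ((1 - x) * ln (1 - x) + x) / c).
assert (HB : forall x, x < 1 -> derivable_pt_lim B x (- ln (1 - x) / c)).
{ intros x Hx; apply is_derive_Reals; unfold B; auto_derive; [lra|].
  replace (1 + - x) with (1 - x) by ring; field; lra. }
destruct (MVT_cor2 (fun x => B x - A x) (fun x => - ln (1 - x) / c - fb x) 0 p0)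
  as [xi [Hxi1 Hxi2]]; [lra| |].
{ intros x Hx; apply derivable_pt_lim_minus; [apply HB; lra|apply A_deriv]. }
assert (0 < (- ln (1 - xi) / c - fb xi) * (p0 - 0)).
{ apply Rmult_lt_0_compat; [specialize (Hlog xi); lra|lra]. }
assert (HB0 : B 0 = 0) by (unfold B; rewrite Rminus_0_r ln_1; field; lra).
assert (HBp0 : B p0 = p0 / c - exp (- c)).
{ unfold B; replace (1 - p0) with (exp (- c)) by lra; rewrite ln_exp; field; lra. }
assert (Htail := area_increment_le p0 1 ltac:(lra) ltac:(lra)).
lra.
Qed.

Lemma stall_point G : 0 < G -> 1 - exp (- (G / Rr)) <= G ->
  exists p, 0 < p <= 1 - exp (- (G / Rr)) /\ p <= 1 - exp (- (G / Rr) * fb p).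
Proof.
intros HG Hle; apply NNPP; intros Hnone.
assert (Hbound : Rr < (1 - exp (- (G / Rr))) / (G / Rr)).
{ apply (area_bound (G / Rr)); [apply Rdiv_lt_0_compat; lra|reflexivity|].
  intros p Hp; apply Rnot_le_lt; intros Hp'; apply Hnone; exists p; split; assumption. }
replace ((1 - exp (- (G / Rr))) / (G / Rr)) with (Rr * ((1 - exp (- (G / Rr))) / G))
  in Hbound by (field; lra).
assert (Hratio : 1 < (1 - exp (- (G / Rr))) / G) by (apply (Rmult_lt_reg_l Rr); lra).
assert (G * 1 < G * ((1 - exp (- (G / Rr))) / G)) by (apply Rmult_lt_compat_l; lra).
replace (G * ((1 - exp (- (G / Rr))) / G)) with (1 - exp (- (G / Rr))) in * by (field; lra).
lra.
Qed.

Lemma iterates_stay_above c p (u : nat -> R) : 0 < c -> 0 < p ->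
  p <= u 0%nat <= 1 -> (forall l, u (S l) = 1 - exp (- c * fb (u l))) ->
  p <= 1 - exp (- c * fb p) -> forall l, p <= u l <= 1.
Proof.
intros Hc Hp Hu0 HuS Hstall; induction l as [|l IH]; [exact Hu0|].
rewrite HuS; split.
- assert (fb p <= fb (u l)) by (apply fb_nondecr; lra).
  assert (exp (- c * fb (u l)) <= exp (- c * fb p)) by (apply exp_le_compat; nra).
  lra.
- assert (0 < exp (- c * fb (u l))) by apply exp_pos; lra.
Qed.

Lemma no_decoding_beyond_fixed_point GG G (u : nat -> R) :
  0 < GG -> GG = 1 - exp (- (GG / Rr)) -> GG < G ->
  u 0%nat = 1 - exp (- (G / Rr)) -> (forall l, u (S l) = 1 - exp (- (G / Rr) * fb (u l))) ->
  ~ Un_cv u 0.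
Proof.
intros HGG Hfix HG Hu0 HuS Hcv.
destruct (stall_point G) as [p [Hp Hstall]];
  [lra|apply (above_fixed_point Rr GG G); lra|].
assert (Hexp := exp_pos (- (G / Rr))).
assert (Hstay := iterates_stay_above (G / Rr) p u
  ltac:(apply Rdiv_lt_0_compat; lra) ltac:(lra) ltac:(lra) HuS Hstall).
destruct (Hcv p) as [N HN]; [lra|].
specialize (HN N (le_n N)); specialize (Hstay N).
unfold Rdist in HN; rewrite Rminus_0_r Rabs_right in HN; lra.
Qed.

End Stalling.

Lemma INR_concave_form (a b c d x y z : nat) :
  (a * b * x + c * d * y <= 2 * b * d * z)%nat ->
  INR a * INR b * INR x + INR c * INR d * INR y <= 2 * INR b * INR d * INR z.
Proof.
move=> /leP /le_INR; rewrite -!multE -!plusE !plus_INR !mult_INR.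
by replace (INR 2) with 2 by (simpl; ring).
Qed.

Section Ensemble.
Variables (theta k : nat) (n : nat -> nat) (Gm : forall h : nat, 'M['F_2]_(k, n h)).
Variables (Lam : nat -> R).
Hypothesis theta_pos : (1 <= theta)%nat.
Hypothesis k_pos : (0 < k)%nat.
Hypothesis Gm_dim : forall h, (h < theta)%nat -> has_dim (Gm h).
Hypothesis Lam_nonneg : forall h, (h < theta)%nat -> 0 <= Lam h.
Hypothesis Lam_sum : sum_f_R0 Lam (theta - 1) = 1.
Hypothesis nbar_pos : 0 < nbar theta Lam n.

Definition info (h g : nat) : R := INR (etilde (Gm h) g).

Lemma f_b_bern p : f_b theta Gm Lam p =
  / nbar theta Lam n * sum_f_R0 (fun h => Lam h * bern (info_diff (info h) (n h)) (n h - 1) p) (theta - 1).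
Proof. reflexivity. Qed.

Lemma length_pos h : (h <= theta - 1)%nat -> (0 < n h)%nat.
Proof.
intros Hh; have := rank_leq_col (Gm h); rewrite Gm_dim; lia.
Qed.

Lemma info_concave h g : (g + 2 <= n h)%nat ->
  INR (g + 2) * INR (g + 1) * info h (g + 2) + INR (n h - g) * INR (n h - g - 1) * info h g
  <= 2 * INR (g + 1) * INR (n h - g - 1) * info h (g + 1).
Proof.
intros Hg; rewrite /info (_ : (n h - g - 1 = n h - g.+1)%nat); last by lia.
rewrite !addn2 !addn1; apply: INR_concave_form; apply: etilde_concave; lia.
Qed.

Lemma f_b_nondecr p q : 0 <= p -> p <= q -> q <= 1 -> f_b theta Gm Lam p <= f_b theta Gm Lam q.
Proof.
intros Hp Hpq Hq; rewrite !f_b_bern.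
apply Rmult_le_compat_l; [apply Rlt_le, Rinv_0_lt_compat, nbar_pos|].
apply sum_Rle; intros h Hh; apply Rmult_le_compat_l; [apply Lam_nonneg; lia|].
apply info_diff_nondecr; [apply length_pos; lia|apply info_concave|lra..].
Qed.

(* At p = 1 the h-th summand is Lam h * etilde_1 <= Lam h * n h. *)
Lemma f_b_le_1 p : 0 <= p <= 1 -> f_b theta Gm Lam p <= 1.
Proof.
intros Hp; apply Rle_trans with (f_b theta Gm Lam 1); [apply f_b_nondecr; lra|].
rewrite f_b_bern -[X in _ <= X](Rinv_l (nbar theta Lam n)); [|lra].
apply Rmult_le_compat_l; [apply Rlt_le, Rinv_0_lt_compat, nbar_pos|].
apply sum_Rle; intros h Hh; apply Rmult_le_compat_l; [apply Lam_nonneg; lia|].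
have Hn := length_pos h ltac:(lia).
rewrite bern_at_1 /info_diff /info.
replace (n h - (n h - 1))%nat with 1%nat by lia.
replace (n h - 1 - (n h - 1))%nat with 0%nat by lia.
rewrite etilde0 /=; have := etilde1_le (Gm h); move=> /leP /le_INR; lra.
Qed.

Definition f_b_antider (p : R) : R :=
  / nbar theta Lam n * sum_f_R0 (fun h => Lam h * - info_poly (info h) (n h) p) (theta - 1).

Lemma f_b_antider_deriv x : derivable_pt_lim f_b_antider x (f_b theta Gm Lam x).
Proof.
rewrite f_b_bern; apply derivable_pt_lim_scal.
apply (derivable_pt_lim_sum (fun h p => Lam h * - info_poly (info h) (n h) p)
  (fun h p => Lam h * bern (info_diff (info h) (n h)) (n h - 1) p)).
intros h Hh; apply (derivable_pt_lim_scal (fun p => - info_poly (info h) (n h) p)).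
apply deriv_info_poly, length_pos; lia.
Qed.

(* Area theorem for codes: the area under f_b is the rate k / nbar, because
   etilde_0 = 0 and etilde_n = rank = k. *)
Lemma f_b_area : f_b_antider 1 - f_b_antider 0 = INR k / nbar theta Lam n.
Proof.
unfold f_b_antider, info_poly.
rewrite (sum_eq _ (fun h => Lam h * 0)); last first.
{ intros h Hh; rewrite bern_at_1 subnn /info etilde0 /=; ring. }
rewrite (sum_eq (fun h => Lam h * - bern _ (n h) 0) (fun h => Lam h * - INR k)); last first.
{ intros h Hh; rewrite bern_at_0 subn0 /info etilde_full Gm_dim //; lia. }
rewrite -(scal_sum Lam) -(scal_sum Lam) Lam_sum; unfold Rdiv; ring.
Qed.

End Ensemble.

Lemma nbar_nonneg theta (Lam : nat -> R) (n : nat -> nat) :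
  (1 <= theta)%nat -> (forall h, (h < theta)%nat -> 0 <= Lam h) -> 0 <= nbar theta Lam n.
Proof.
intros Htheta HLam; apply sum_f_R0_nonneg; intros h Hh.
apply Rmult_le_pos; [apply HLam; lia|apply pos_INR].
Qed.

Lemma pos_of_pos_ratio a b : 0 <= a -> 0 <= b -> 0 < a / b -> 0 < a /\ 0 < b.
Proof.
intros Ha Hb Hab; split.
- destruct Ha as [Ha| <-]; [exact Ha|]; unfold Rdiv in Hab; rewrite Rmult_0_l in Hab; lra.
- destruct Hb as [Hb| <-]; [exact Hb|]; unfold Rdiv in Hab; rewrite Rinv_0 Rmult_0_r in Hab; lra.
Qed.

(* With no load nothing is ever erased, so G = 0 is below the threshold. *)
Lemma threshold_set_0 theta k (n : nat -> nat) (Gm : forall h : nat, 'M['F_2]_(k, n h))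
  (Lam : nat -> R) (Rr : R) : threshold_set theta Gm Lam Rr 0.
Proof.
assert (Hzero : forall l, p_seq theta Gm Lam Rr 0 l = 0).
{ intros [|l]; simpl; unfold f_s, Rdiv; rewrite Rmult_0_l ?Ropp_0 ?Rmult_0_l exp_0; ring. }
split; [lra|]; intros eps Heps; exists 0%nat; intros l _.
unfold Rdist; rewrite Hzero Rminus_0_r Rabs_R0; exact Heps.
Qed.

Lemma lub_le (E : R -> Prop) x0 M : E x0 -> (forall x, E x -> x <= M) ->
  exists m, is_lub E m /\ m <= M.
Proof.
intros Hx0 HM.
destruct (completeness E) as [m Hm]; [exists M; exact HM|exists x0; exact Hx0|].
exists m; split; [exact Hm|apply Hm; exact HM].
Qed.

Theorem mainTheorem8
  (Rr GG : R) (hR0 : 0 < Rr) (hR1 : Rr < 1)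
  (hGG0 : 0 < GG) (hGG1 : GG < 1) (hGGeq : GG = 1 - exp (- (GG / Rr)))
  (theta k : nat) (n : nat -> nat) (d : nat -> nat)
  (Gm : forall h : nat, 'M['F_2]_(k, n h)) (Lam : nat -> R)
  (htheta : (1 <= theta)%nat)
  (hdim : forall h, (h < theta)%nat -> has_dim (Gm h))
  (hd : forall h, (h < theta)%nat -> (2 <= d h)%nat /\ min_dist_ge (Gm h) (d h))
  (hidle : forall h, (h < theta)%nat -> no_idle (Gm h))
  (hLam0 : forall h, (h < theta)%nat -> 0 <= Lam h)
  (hLam1 : sum_f_R0 Lam (theta - 1) = 1)
  (hrate : INR k / nbar theta Lam n = Rr) :
  exists Gstar, is_lub (threshold_set theta Gm Lam Rr) Gstar /\ Gstar <= GG.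
Proof.
(* The rate equation forces k > 0 and nbar > 0. *)
destruct (pos_of_pos_ratio (INR k) (nbar theta Lam n)) as [Hk Hnbar];
  [apply pos_INR|apply nbar_nonneg; assumption|lra|].
have {}Hk : (0 < k)%nat by apply/ltP; apply INR_lt; exact Hk.
have Harea : f_b_antider theta k n Gm Lam 1 - f_b_antider theta k n Gm Lam 0 = Rr.
{ rewrite (f_b_area _ _ _ _ _ htheta Hk hdim hLam1); exact hrate. }
apply (lub_le _ 0); [apply threshold_set_0|].
intros G [_ Hcv]; apply Rnot_lt_le; intros HG.
apply (no_decoding_beyond_fixed_point (f_b theta Gm Lam) (f_b_antider theta k n Gm Lam) Rr hR0
  (f_b_nondecr _ _ _ _ _ htheta Hk hdim hLam0 Hnbar)
  (f_b_le_1 _ _ _ _ _ htheta Hk hdim hLam0 Hnbar)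
  (f_b_antider_deriv _ _ _ _ _ htheta Hk hdim) Harea GG G (p_seq theta Gm Lam Rr G));
  auto.
Qed.
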